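(* The following bilinear equations hold for all $k,N\in\mathbb{Z}$: \begin{align*} &\tau^{k+1}_{N+1}\tau^{k+2}_{N-1} -Q^{(k-4N+2)/2}\gamma^{-2}\alpha_0\tau^{k+3}_{N}\tau^{k}_{N} -Q^{-k+4N-2}\gamma^{4}{\alpha_0}^{-2}\tau^{k+1}_{N}\tau^{k+2}_{N}=0,\\ &\tau^{k+2}_{N+1}\tau^{k+1}_{N-1} -Q^{(k+4N+2)/2}\gamma^{2}\alpha_0\tau^{k+3}_{N}\tau^{k}_{N} -Q^{-k-4N-2}\gamma^{-4}{\alpha_0}^{-2}\tau^{k+2}_{N}\tau^{k+1}_{N}=0,\\ &Q^{-(3k-4N+4)/2}\gamma^{2}{\alpha_0}^{-3}\tau^{k+3}_{N}\tau^{k}_{N+1} -Q^{-3k+4N-4}\gamma^{4}{\alpha_0}^{-6}\tau^{k+1}_{N}\tau^{k+2}_{N+1} -\tau^{k+1}_{N+1}\tau^{k+2}_{N}=0,\\ &Q^{-(3k+4N+8)/2}\gamma^{-2}{\alpha_0}^{-3}\tau^{k+3}_{N+1}\tau^{k}_{N} -Q^{-3k-4N-8}\gamma^{-4}{\alpha_0}^{-6}\tau^{k+2}_{N}\tau^{k+1}_{N+1} -\tau^{k+2}_{N+1}\tau^{k+1}_{N}=0. \end{align*}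
   Context: Let $q,c,a_0,a_1,a_2\in\mathbb{C}^\times$ with $a_0a_1a_2=q$, and let $\tau_i,\overline{\tau}_i$ ($i\in\mathbb{Z}/3\mathbb{Z}$) be variables (the $\tau$ functions of the $q$-Painlevé III system). The extended affine Weyl group $\widetilde{W}((A_2+A_1)^{(1)})=\langle s_0,s_1,s_2,\pi,w_0,w_1,r\rangle$ acts on them (elements act on functions from the right, $w.F(a_i,\tau_j)=F(a_i.w,\tau_j.w)$) by: $s_i(a_i)=a_i^{-1}$, $s_i(a_{i\pm1})=a_{i\pm1}a_i$, $\pi(a_i)=a_{i+1}$, $w_0,w_1,r$ fix all $a_i$; $s_i(\tau_i)=\dfrac{u_i\tau_{i+1}\overline{\tau}_{i-1}+\overline{\tau}_{i+1}\tau_{i-1}}{u_i^{1/2}\overline{\tau}_i}$, $s_i(\overline{\tau}_i)=\dfrac{v_i\overline{\tau}_{i+1}\tau_{i-1}+\tau_{i+1}\overline{\tau}_{i-1}}{v_i^{1/2}\tau_i}$, $s_i$ fixes $\tau_j,\overline{\tau}_j$ for $j\neq i$; $\pi(\tau_i)=\tau_{i+1}$, $\pi(\overline{\tau}_i)=\overline{\tau}_{i+1}$; $w_0(\overline{\tau}_i)=\dfrac{a_{i+1}^{1/3}(\overline{\tau}_i\tau_{i+1}\tau_{i+2}+u_{i-1}\tau_i\overline{\tau}_{i+1}\tau_{i+2}+u_{i+1}^{-1}\tau_i\tau_{i+1}\overline{\tau}_{i+2})}{a_{i+2}^{1/3}\overline{\tau}_{i+1}\overline{\tau}_{i+2}}$,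 $w_0(\tau_i)=\tau_i$; $r(\tau_i)=\overline{\tau}_i$, $r(\overline{\tau}_i)=\tau_i$; where $u_i=q^{-1/3}c^{-2/3}a_i$, $v_i=q^{1/3}c^{2/3}a_i$. The translation $T_4=rw_0$ fixes $a_0,a_1,a_2$ and maps $c\mapsto qc$. Set $R_1=\pi^2s_1$ (so $R_1^2=T_1=\pi s_2 s_1$) and specialize $a_2=q^{1/2}$; then $R_1$ acts on parameters as $(a_0,a_1,c)\mapsto(q^{1/2}a_0,q^{-1/2}a_1,c)$. Define $\tau^k_N=R_1^kT_4^N(\tau_1)$ for $k,N\in\mathbb{Z}$ (so $\tau_0=\tau^{-2}_0$, $\tau_1=\tau^0_0$, $\tau_2=\tau^{-1}_0$, $\overline{\tau}_0=\tau^{-2}_1$, $\overline{\tau}_1=\tau^0_1$, $\overline{\tau}_2=\tau^{-1}_1$), and put $\alpha_0=a_0^{1/6}$, $\gamma=c^{1/6}$, $Q=q^{1/6}$. *)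

From HB Require Import structures.
From mathcomp Require Import all_boot all_order all_algebra.
From mathcomp Require Import mpoly.
From mathcomp Require Import reals complex.

Set Implicit Arguments.
Unset Strict Implicit.
Unset Printing Implicit Defensive.

Import Order.TTheory GRing.Theory Num.Theory.
Local Open Scope ring_scope.

Section Action.
Variable K : fieldType.

(* A point of the (unspecialized) phase space:
     A i  = a_i^{1/6},  cc = c^{1/6},  zz = q^{1/12}  (so A 0 * A 1 * A 2 = zz^2),
     tau i = tau_i,   taub i = \overline{tau}_i. *)
Record pt := Pt { A : 'I_3 -> K; cc : K; zz : K; tau : 'I_3 -> K; taub : 'I_3 -> K }.

Definition succ3 (i : 'I_3) : 'I_3 := inZp i.+1.
Definition pred3 (i : 'I_3) : 'I_3 := inZp (i + 2).

(* u_i = q^{-1/3} c^{-2/3} a_i,  v_i = q^{1/3} c^{2/3} a_i, and their square roots *)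
Definition u (p : pt) i := (zz p ^+ 4 * cc p ^+ 4)^-1 * A p i ^+ 6.
Definition uh (p : pt) i := (zz p ^+ 2 * cc p ^+ 2)^-1 * A p i ^+ 3.
Definition v (p : pt) i := zz p ^+ 4 * cc p ^+ 4 * A p i ^+ 6.
Definition vh (p : pt) i := zz p ^+ 2 * cc p ^+ 2 * A p i ^+ 3.

(* For a generator w, [w_map p] is the point whose coordinates are the values at p
   of the images w(a_i^{1/6}), w(c^{1/6}), w(q^{1/12}), w(tau_j), w(taub_j).
   Thus w(F) = F \o w_map, and the automorphism w1 w2 (= w1 \o w2) corresponds to
   the point map  w2_map \o w1_map. *)
Definition s_map (i : 'I_3) (p : pt) : pt :=
  Pt (fun j => if j == i then (A p i)^-1 else A p j * A p i) (cc p) (zz p)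
     (fun j => if j == i then
        (u p i * tau p (succ3 i) * taub p (pred3 i) + taub p (succ3 i) * tau p (pred3 i))
          / (uh p i * taub p i)
      else tau p j)
     (fun j => if j == i then
        (v p i * taub p (succ3 i) * tau p (pred3 i) + tau p (succ3 i) * taub p (pred3 i))
          / (vh p i * tau p i)
      else taub p j).

Definition pi_map (p : pt) : pt :=
  Pt (fun j => A p (succ3 j)) (cc p) (zz p)
     (fun j => tau p (succ3 j)) (fun j => taub p (succ3 j)).

(* w_0 : c -> c^{-1} (so c^{1/6} -> c^{-1/6}), a_i fixed, tau_i fixed;
   a_{i+1}^{1/3}/a_{i+2}^{1/3} = (A (i+1))^2 / (A (i+2))^2. *)
Definition w0_map (p : pt) : pt :=
  Pt (A p) (cc p)^-1 (zz p) (tau p)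
     (fun i =>
        let i1 := succ3 i in let i2 := succ3 (succ3 i) in let im := pred3 i in
        A p i1 ^+ 2 *
          (taub p i * tau p i1 * tau p i2 + u p im * tau p i * taub p i1 * tau p i2
           + (u p i1)^-1 * tau p i * tau p i1 * taub p i2)
        / (A p i2 ^+ 2 * taub p i1 * taub p i2)).

(* r : tau <-> taub, c -> q^{-1} c^{-1} (so c^{1/6} -> q^{-1/6} c^{-1/6}), a_i fixed. *)
Definition r_map (p : pt) : pt :=
  Pt (A p) (zz p ^+ 2 * cc p)^-1 (zz p) (taub p) (tau p).

(* R_1 = pi^2 s_1,  R_1^{-1} = s_1 pi,  T_4 = r w_0,  T_4^{-1} = w_0 r. *)
Definition R1_map : pt -> pt := s_map 1 \o pi_map \o pi_map.
Definition R1inv_map : pt -> pt := pi_map \o s_map 1.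
Definition T4_map : pt -> pt := w0_map \o r_map.
Definition T4inv_map : pt -> pt := r_map \o w0_map.

Definition iterZ (n : int) (f finv : pt -> pt) : pt -> pt :=
  match n with Posz m => iter m f | Negz m => iter m.+1 finv end.

(* Specialized point (a_2 = q^{1/2}, a_0 a_1 a_2 = q): coordinates
   x 0 = q^{1/12} = Q^{1/2},  x 1 = alpha_0 = a_0^{1/6},  x 2 = gamma = c^{1/6},
   x 3..5 = tau_0..tau_2,  x 6..8 = taub_0..taub_2. *)
Definition crd (x : 'I_9 -> K) (n : nat) : K := x (inord n).

Definition spec_pt (x : 'I_9 -> K) : pt :=
  Pt (fun j => if j == 0 then crd x 1 else if j == 1 then crd x 0 / crd x 1 else crd x 0)
     (crd x 2) (crd x 0)
     (fun j => crd x (3 + j)) (fun j => crd x (6 + j)).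

(* tau^k_N = R_1^k T_4^N (tau_1), evaluated at the specialized point x. *)
Definition tauKN (x : 'I_9 -> K) (k n : int) : K :=
  tau (iterZ n T4_map T4inv_map (iterZ k R1_map R1inv_map (spec_pt x))) 1.

End Action.

From Pilot Require Import Defs.
From HB Require Import structures.
From mathcomp Require Import all_boot all_order all_algebra.
From mathcomp Require Import mpoly.
From mathcomp Require Import reals complex.
From mathcomp Require Import ring.
From Stdlib Require Import FunctionalExtensionality.
Import Order.TTheory GRing.Theory Num.Theory.
Local Open Scope ring_scope.
Set Implicit Arguments.
Unset Strict Implicit.
Unset Printing Implicit Defensive.

(* The coordinates of R1^j T4^e (p) are rational functions of the coordinates of p, and the
   four equations for k = N = 0 are rational identities, checked by [field]. For general
   (k, N) one evaluates them at the point T4^N R1^k (x): R1 and T4 commute and are inverted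
   by R1^-1 and T4^-1, so tau^{k+j}_{N+e} is a coordinate of T4^e R1^j of that point, whose
   parameters are alpha_0 Q^{k/2} and gamma Q^N since R1 multiplies alpha_0 by Q^{1/2} and T4
   multiplies gamma by Q.
   All of this holds off the zero set of the denominators involved. The maps are
   subtraction-free, so every coordinate is a rational function positive at the point with
   all coordinates 1; hence the exceptional set lies in the zero set of a polynomial that
   does not vanish there. *)

Section PointMaps.
Variable K : fieldType.
Implicit Types p q : pt K.

Lemma succ3_0 : succ3 0 = 1. Proof. exact: val_inj. Qed.
Lemma succ3_1 : succ3 1 = 2 :> 'I_3. Proof. exact: val_inj. Qed.
Lemma succ3_2 : succ3 2 = 0. Proof. exact: val_inj. Qed.
Lemma pred3_0 : Defs.pred3 0 = 2 :> 'I_3. Proof. exact: val_inj. Qed.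
Lemma pred3_1 : Defs.pred3 1 = 0. Proof. exact: val_inj. Qed.
Lemma pred3_2 : Defs.pred3 2 = 1. Proof. exact: val_inj. Qed.
Definition ord3E := (succ3_0, succ3_1, succ3_2, pred3_0, pred3_1, pred3_2, eqxx,
  (erefl : (0 == 1 :> 'I_3) = false), (erefl : (0 == 2 :> 'I_3) = false),
  (erefl : (1 == 0 :> 'I_3) = false), (erefl : (1 == 2 :> 'I_3) = false),
  (erefl : (2 == 0 :> 'I_3) = false), (erefl : (2 == 1 :> 'I_3) = false)).

Lemma ord3_ind (P : 'I_3 -> Prop) : P 0 -> P 1 -> P 2 -> forall j, P j.
Proof.
move=> P0 P1 P2 [[|[|[|m]]] hm] //.
- by rewrite (_ : Ordinal hm = 0) //; apply: val_inj.
- by rewrite (_ : Ordinal hm = 1) //; apply: val_inj.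
- by rewrite (_ : Ordinal hm = 2) //; apply: val_inj.
Qed.

Lemma pt_ext p q : A p =1 A q -> cc p = cc q -> zz p = zz q ->
  tau p =1 tau q -> taub p =1 taub q -> p = q.
Proof.
case: p q => A1 c1 z1 t1 b1 [A2 c2 z2 t2 b2] /= eA -> -> et eb.
by rewrite (functional_extensionality _ _ eA) (functional_extensionality _ _ et)
  (functional_extensionality _ _ eb).
Qed.

(* a_2 = q^{1/2}, hence a_1 = q^{1/2} / a_0, in the sixth-root coordinates of [pt]. *)
Definition specialized p := A p 1 = zz p / A p 0 /\ A p 2 = zz p.

(* The denominators met when R1, R1^-1, T4, T4^-1 are applied to a specialized point. *)
Definition admissible p : bool :=
  let a := A p 0 in let z := zz p in let c := cc p in
  let t0 := tau p 0 in let t1 := tau p 1 in let t2 := tau p 2 in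
  let b0 := taub p 0 in let b1 := taub p 1 in let b2 := taub p 2 in
  [&& a != 0, z != 0, c != 0, t0 != 0, t1 != 0, t2 != 0, b0 != 0, b1 != 0, b2 != 0,
  (t0 * b1 * b2 + (z * c) ^+ 4 * z ^+ 6 * b0 * t1 * b2) * ((z * c) ^+ 4 * z ^+ 6)
    + a ^+ 6 * b0 * b1 * t2 != 0,
  a ^+ 6 * t1 * b2 + b1 * t2 * (z * c) ^+ 4 != 0,
  (z * c) ^+ 4 * z ^+ 6 * b2 * t0 + t2 * b0 * a ^+ 6 != 0,
  z ^+ 2 * t2 * b0 + b2 * t0 * (c ^+ 4 * a ^+ 6) != 0,
  (z * c) ^+ 4 * a ^+ 6 * b1 * t2 + t1 * b2 != 0,
  b2 * t0 * t1 * (c ^+ 4 * a ^+ 6) + z ^+ 2 * t2 * b0 * t1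
    + (z * c) ^+ 4 * t2 * t0 * b1 * c ^+ 4 != 0,
  b1 * t2 * t0 * (z * c) ^+ 4 + a ^+ 6 * t1 * b2 * t0
    + c ^+ 4 * t1 * t2 * b0 * (z ^+ 2 * c ^+ 4) != 0,
  (b0 * t1 * t2 * c ^+ 4 + z ^+ 2 * t0 * b1 * t2) * z ^+ 2
    + c ^+ 4 * a ^+ 6 * t0 * t1 * b2 * c ^+ 4 != 0,
  (t2 * b0 * b1 * a ^+ 6 + (z * c) ^+ 4 * z ^+ 6 * b2 * t0 * b1) * (z * c) ^+ 4
    + b2 * b0 * t1 != 0 &
  (t1 * b2 * b0 + (z * c) ^+ 4 * a ^+ 6 * b1 * t2 * b0) * ((z * c) ^+ 4 * z ^+ 6)
    + b1 * b2 * t0 != 0].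

Ltac unfold_maps :=
  rewrite /R1_map /R1inv_map /T4_map /T4inv_map /= /s_map /pi_map /w0_map /r_map /=
    ?ord3E /u /uh /v /vh /= ?ord3E.

Ltac split_andb := repeat match goal with
  | H : is_true (_ && _) |- _ => case/andP: H => ? ?
  | |- is_true (_ && _) => apply/andP; split end.

Ltac field_at p := rewrite /specialized /admissible; unfold_maps;
  case=> ? ?; repeat match goal with H : A _ _ = _ |- _ => rewrite ?H; clear H end;
  move: (A p 0) (zz p) (cc p) (tau p 0) (tau p 1) (tau p 2) (taub p 0) (taub p 1) (taub p 2)
    => a z c t0 t1 t2 b0 b1 b2 np; split_andb; field; split_andb; rewrite ?oner_neq0 //.

Ltac pt_field_at p := move=> ? ?; apply: pt_ext; try apply: ord3_ind;
  match goal with sp : specialized _, np : is_true (admissible _) |- _ => move: sp np end;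
  field_at p.

Lemma R1inv_mapK p : specialized p -> admissible p -> R1_map (R1inv_map p) = p.
Proof. pt_field_at p. Qed.

Lemma R1_mapK p : specialized p -> admissible p -> R1inv_map (R1_map p) = p.
Proof. pt_field_at p. Qed.

Lemma T4inv_mapK p : specialized p -> admissible p -> T4_map (T4inv_map p) = p.
Proof. pt_field_at p. Qed.

Lemma T4_mapK p : specialized p -> admissible p -> T4inv_map (T4_map p) = p.
Proof. pt_field_at p. Qed.

Lemma R1_T4_mapC p : specialized p -> admissible p ->
  R1_map (T4_map p) = T4_map (R1_map p).
Proof. pt_field_at p. Qed.

(* The equations for k = N = 0, written at p = R1^2 (y) (p = R1 (y) for the second one);
   thus [A p 0 / zz p ^+ 2] is the alpha_0 of y. *)
Lemma bilinear1_base p : specialized p -> admissible p ->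
  taub p 2 * tau (T4inv_map p) 1
  - zz p ^+ 2 / cc p ^+ 2 * (A p 0 / zz p ^+ 2) * tau (R1_map p) 1 * tau p 0
  - cc p ^+ 4 / zz p ^+ 4 / (A p 0 / zz p ^+ 2) ^+ 2 * tau p 2 * tau p 1 = 0.
Proof. field_at p. Qed.

Lemma bilinear2_base p : specialized p -> admissible p ->
  taub (R1_map p) 1 * tau (T4inv_map p) 1
  - zz p ^+ 2 * cc p ^+ 2 * (A p 0 / zz p) * tau (R1_map (R1_map p)) 1 * tau p 2
  - (zz p ^+ 4 * cc p ^+ 4 * (A p 0 / zz p) ^+ 2)^-1 * tau (R1_map p) 1 * tau p 1 = 0.
Proof. field_at p. Qed.

Lemma bilinear3_base p : specialized p -> admissible p ->
  cc p ^+ 2 / zz p ^+ 4 / (A p 0 / zz p ^+ 2) ^+ 3 * tau (R1_map p) 1 * taub p 0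
  - cc p ^+ 4 / zz p ^+ 8 / (A p 0 / zz p ^+ 2) ^+ 6 * tau p 2 * taub p 1
  - taub p 2 * tau p 1 = 0.
Proof. field_at p. Qed.

Lemma bilinear4_base p : specialized p -> admissible p ->
  (zz p ^+ 8 * cc p ^+ 2 * (A p 0 / zz p ^+ 2) ^+ 3)^-1 * taub (R1_map p) 1 * tau p 0
  - (zz p ^+ 16 * cc p ^+ 4 * (A p 0 / zz p ^+ 2) ^+ 6)^-1 * tau p 1 * taub p 2
  - taub p 1 * tau p 2 = 0.
Proof. field_at p. Qed.

Lemma A0_R1_map p : specialized p -> A (R1_map p) 0 = zz p * A p 0.
Proof. by case=> _ eA2; unfold_maps; rewrite eA2. Qed.

Lemma A0_R1inv_map p : specialized p -> A (R1inv_map p) 0 = (zz p)^-1 * A p 0.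
Proof. by case=> eA1 _; unfold_maps; rewrite eA1 invf_div mulrC. Qed.

Lemma cc_T4_map p : cc (T4_map p) = zz p ^+ 2 * cc p.
Proof. by rewrite /= invrK. Qed.

Lemma cc_T4inv_map p : cc (T4inv_map p) = (zz p ^+ 2)^-1 * cc p.
Proof. by rewrite /= invfM invrK. Qed.

Lemma specialized_R1_map p : A p 0 != 0 -> zz p != 0 ->
  specialized p -> specialized (R1_map p).
Proof. by move=> ? ? [eA1 eA2]; split; unfold_maps; rewrite ?eA1 ?eA2; field; split_andb. Qed.

Lemma specialized_R1inv_map p : A p 0 != 0 -> zz p != 0 ->
  specialized p -> specialized (R1inv_map p).
Proof. by move=> ? ? [eA1 eA2]; split; unfold_maps; rewrite ?eA1 ?eA2; field; split_andb. Qed.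

Lemma tau_R1_map0 p : tau (R1_map p) 0 = tau p 2. Proof. by unfold_maps. Qed.
Lemma tau_R1_map2 p : tau (R1_map p) 2 = tau p 1. Proof. by unfold_maps. Qed.
Lemma taub_R1_map0 p : taub (R1_map p) 0 = taub p 2. Proof. by unfold_maps. Qed.
Lemma taub_R1_map2 p : taub (R1_map p) 2 = taub p 1. Proof. by unfold_maps. Qed.
End PointMaps.

Section Genericity.
Variables (F : numFieldType) (n : nat).
Local Notation V := ('I_n -> F).
Implicit Types (P Q : V -> Prop) (f g : V -> F).

Definition ones : V := fun=> 1.

(* Not vanishing at [ones] certifies that the exceptional polynomial is nonzero. *)
Definition generically P :=
  exists2 D : {mpoly F[n]}, D.@[ones] != 0 & forall x, D.@[x] != 0 -> P x.

Lemma generically_all P : (forall x, P x) -> generically P.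
Proof. by exists 1 => [|x _]; rewrite ?meval1 ?oner_neq0. Qed.

Lemma generically_and P Q :
  generically P -> generically Q -> generically (fun x => P x /\ Q x).
Proof.
move=> [D1 D1ones P1] [D2 D2ones Q2]; exists (D1 * D2); first by rewrite mevalM mulf_neq0.
by move=> x; rewrite mevalM mulf_eq0 negb_or => /andP[/P1 ? /Q2 ?].
Qed.

Lemma generically_mono P Q : (forall x, P x -> Q x) -> generically P -> generically Q.
Proof. by move=> PQ [D ? HD]; exists D => // x /HD /PQ. Qed.

Lemma generically_andb (a b : V -> bool) :
  generically a -> generically b -> generically (fun x => a x && b x).
Proof. by move=> ga gb; apply: generically_mono (generically_and ga gb) => x [-> ->]. Qed.

Lemma generically_forall_ltn (P : nat -> V -> Prop) m :
  (forall j, generically (P j)) -> generically (fun x => forall j, (j < m)%N -> P j x).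
Proof.
move=> gP; elim: m => [|m IH]; first exact: generically_all.
apply: generically_mono (generically_and IH (gP m)) => x [Px Pmx] j.
by rewrite ltnS leq_eqVlt => /orP[/eqP -> //|/Px].
Qed.

Definition rational f := exists p q : {mpoly F[n]},
  generically (fun x => q.@[x] != 0 /\ f x = p.@[x] / q.@[x]).

Lemma eq_rational f g : f =1 g -> rational f -> rational g.
Proof. by move=> fg [p [q gf]]; exists p, q; apply: generically_mono gf => x; rewrite fg. Qed.

Lemma rational_neq0 f : rational f -> f ones != 0 -> generically (fun x => f x != 0).
Proof.
move=> [p [q [D D1 HD]]] f1; have [q1 fE] := HD _ D1.
have p1 : p.@[ones] != 0 by apply: contra f1; rewrite fE => /eqP ->; rewrite mul0r.
exists (D * p); first by rewrite mevalM mulf_neq0.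
move=> x; rewrite mevalM mulf_eq0 negb_or => /andP[/HD [qx ->] px].
by rewrite mulf_neq0 // invr_eq0.
Qed.

Lemma rational_cst c : rational (fun=> c).
Proof.
exists c%:MP, 1; apply: generically_all => x.
by rewrite mevalC meval1 divr1 oner_neq0.
Qed.

Lemma rational_coord i : rational (fun x => x i).
Proof.
exists 'X_i, 1; apply: generically_all => x.
by rewrite mevalXU meval1 divr1 oner_neq0.
Qed.

Lemma rationalD f g : rational f -> rational g -> rational (fun x => f x + g x).
Proof.
move=> [p1 [q1 f1]] [p2 [q2 g2]]; exists (p1 * q2 + p2 * q1), (q1 * q2).
apply: generically_mono (generically_and f1 g2) => x [[q1x ->] [q2x ->]].
rewrite mevalD !mevalM mulf_neq0 //; split=> //.
by field; apply/andP.
Qed.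

Lemma rationalM f g : rational f -> rational g -> rational (fun x => f x * g x).
Proof.
move=> [p1 [q1 f1]] [p2 [q2 g2]]; exists (p1 * p2), (q1 * q2).
apply: generically_mono (generically_and f1 g2) => x [[q1x ->] [q2x ->]].
rewrite !mevalM mulf_neq0 //; split=> //.
by field; apply/andP.
Qed.

Lemma rationalV f : rational f -> f ones != 0 -> rational (fun x => (f x)^-1).
Proof.
move=> rf f1; have fx0 := rational_neq0 rf f1.
move: rf => [p [q gf]]; exists q, p.
apply: generically_mono (generically_and gf fx0) => x [[qx fE] fx].
have px : p.@[x] != 0 by apply: contra fx; rewrite fE => /eqP ->; rewrite mul0r.
by rewrite fE invf_div.
Qed.

Lemma rationalX f m : rational f -> rational (fun x => f x ^+ m).
Proof.
move=> rf; elim: m => [|m IH]; first exact: rational_cst.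
by apply: eq_rational (rationalM rf IH) => x; rewrite exprS.
Qed.

Definition pos_rational f := rational f /\ 0 < f ones.

Lemma pos_rational1 : pos_rational (fun=> 1).
Proof. by split; [apply: rational_cst | apply: ltr01]. Qed.

Lemma pos_rational_coord i : pos_rational (fun x => x i).
Proof. by split; [apply: rational_coord | apply: ltr01]. Qed.

Lemma pos_rationalD f g : pos_rational f -> pos_rational g -> pos_rational (fun x => f x + g x).
Proof. by move=> [? ?] [? ?]; split; [apply: rationalD | apply: addr_gt0]. Qed.

Lemma pos_rationalM f g : pos_rational f -> pos_rational g -> pos_rational (fun x => f x * g x).
Proof. by move=> [? ?] [? ?]; split; [apply: rationalM | apply: mulr_gt0]. Qed.

Lemma pos_rationalV f : pos_rational f -> pos_rational (fun x => (f x)^-1).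
Proof.
by move=> [? f1]; split; [apply: rationalV; rewrite // gt_eqF | rewrite invr_gt0].
Qed.

Lemma pos_rationalX f m : pos_rational f -> pos_rational (fun x => f x ^+ m).
Proof. by move=> [? ?]; split; [apply: rationalX | apply: exprn_gt0]. Qed.

Lemma pos_rational_neq0 f : pos_rational f -> generically (fun x => f x != 0).
Proof. by move=> [rf f1]; apply: rational_neq0; rewrite // gt_eqF. Qed.

Implicit Types Y : V -> pt F.

Definition pos_rational_pt Y :=
  [/\ forall j, pos_rational (fun x => A (Y x) j), pos_rational (fun x => cc (Y x)),
      pos_rational (fun x => zz (Y x)), forall j, pos_rational (fun x => tau (Y x) j)
    & forall j, pos_rational (fun x => taub (Y x) j)].

Ltac pos_rational_tac := repeat match goal with
  | |- pos_rational _ =>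
    first [ match goal with H : forall j : 'I_3, pos_rational _ |- _ => apply: H end
          | match goal with H : pos_rational _ |- _ => apply: H end
          | apply: pos_rational1 | apply: pos_rational_coord | apply: pos_rationalX
          | apply: pos_rationalV | apply: pos_rationalM | apply: pos_rationalD ] end.

Lemma pos_rational_pt_s i Y : pos_rational_pt Y -> pos_rational_pt (fun x => s_map i (Y x)).
Proof.
case=> ? ? ? ? ?; split=> [j|||j|j] /=; rewrite /u /uh /v /vh; pos_rational_tac.
all: by case: eqP => _; pos_rational_tac.
Qed.

Lemma pos_rational_pt_pi Y : pos_rational_pt Y -> pos_rational_pt (fun x => pi_map (Y x)).
Proof. by case=> ? ? ? ? ?; split=> [j|||j|j] /=; pos_rational_tac. Qed.

Lemma pos_rational_pt_w0 Y : pos_rational_pt Y -> pos_rational_pt (fun x => w0_map (Y x)).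
Proof. by case=> ? ? ? ? ?; split=> [j|||j|j] /=; rewrite /u; pos_rational_tac. Qed.

Lemma pos_rational_pt_r Y : pos_rational_pt Y -> pos_rational_pt (fun x => r_map (Y x)).
Proof. by case=> ? ? ? ? ?; split=> [j|||j|j] /=; pos_rational_tac. Qed.

Lemma pos_rational_admissible Y :
  pos_rational_pt Y -> generically (fun x => admissible (Y x)).
Proof.
case=> ? ? ? ? ?; rewrite /admissible.
by repeat apply: generically_andb; apply: pos_rational_neq0; pos_rational_tac.
Qed.

Definition generic_pt Y :=
  pos_rational_pt Y /\ generically (fun x => specialized (Y x)).

Lemma generic_pt_admissible Y : generic_pt Y ->
  generically (fun x => specialized (Y x) /\ admissible (Y x)).
Proof. by case=> rY sY; apply: generically_and sY (pos_rational_admissible rY). Qed.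

End Genericity.

Section GenericMaps.
Context {F : numFieldType} {n : nat}.
Local Notation V := ('I_n -> F).
Local Notation generically := (@generically F n).
Local Notation generic_pt := (@generic_pt F n).
Implicit Types (Y : V -> pt F) (f g h : pt F -> pt F).

Definition preserves_generic f := forall Y, generic_pt Y -> generic_pt (fun x => f (Y x)).

Definition commute_generically f h :=
  forall Y, generic_pt Y -> generically (fun x => f (h (Y x)) = h (f (Y x))).

Lemma generic_pt_R1_map : preserves_generic (@R1_map F).
Proof.
move=> Y [rY sY]; split; first exact/pos_rational_pt_s/pos_rational_pt_pi/pos_rational_pt_pi.
apply: generically_mono (generically_and sY (pos_rational_admissible rY)) => x [sYx].
by case/andP=> A0 /andP[zz0 _]; apply: specialized_R1_map.
Qed.

Lemma generic_pt_R1inv_map : preserves_generic (@R1inv_map F).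
Proof.
move=> Y [rY sY]; split; first exact/pos_rational_pt_pi/pos_rational_pt_s.
apply: generically_mono (generically_and sY (pos_rational_admissible rY)) => x [sYx].
by case/andP=> A0 /andP[zz0 _]; apply: specialized_R1inv_map.
Qed.

Lemma generic_pt_T4_map : preserves_generic (@T4_map F).
Proof. by move=> Y [rY sY]; split; first exact/pos_rational_pt_w0/pos_rational_pt_r. Qed.

Lemma generic_pt_T4inv_map : preserves_generic (@T4inv_map F).
Proof. by move=> Y [rY sY]; split; first exact/pos_rational_pt_r/pos_rational_pt_w0. Qed.

Lemma generically_at (P : pt F -> Prop) :
  (forall p, specialized p -> admissible p -> P p) ->
  forall Y, generic_pt Y -> generically (fun x => P (Y x)).
Proof. by move=> PP Y /generic_pt_admissible; apply: generically_mono => x [? ?]; apply: PP. Qed.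

Lemma commute_generically_sym f h : commute_generically f h -> commute_generically h f.
Proof. by move=> fh Y /fh; apply: generically_mono. Qed.

Lemma preserves_generic_iter f m : preserves_generic f -> preserves_generic (iter m f).
Proof. by move=> pf Y gY; elim: m => //= m; apply: pf. Qed.

Lemma preserves_generic_iterZ f g m :
  preserves_generic f -> preserves_generic g -> preserves_generic (iterZ m f g).
Proof. by case: m => m pf pg; apply: preserves_generic_iter. Qed.

Lemma commute_generically_iter f h m : preserves_generic f ->
  commute_generically f h -> commute_generically (iter m f) h.
Proof.
move=> pf fh Y gY; elim: m => [|m IH]; first exact: generically_all.
apply: generically_mono (generically_and IH (fh _ (preserves_generic_iter m pf gY))).
by move=> x /= [-> ->].
Qed.

Lemma commute_generically_iterZ f g h m : preserves_generic f -> preserves_generic g ->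
  commute_generically f h -> commute_generically g h -> commute_generically (iterZ m f g) h.
Proof. by case: m => m pf pg fh gh; apply: commute_generically_iter. Qed.

Section Inverses.
Variables f g : pt F -> pt F.
Hypotheses (pf : preserves_generic f) (pg : preserves_generic g).
Hypotheses (fK : forall Y, generic_pt Y -> generically (fun x => g (f (Y x)) = Y x))
           (gK : forall Y, generic_pt Y -> generically (fun x => f (g (Y x)) = Y x)).

Lemma iterZ_addr1 m Y : generic_pt Y ->
  generically (fun x => iterZ (m + 1) f g (Y x) = f (iterZ m f g (Y x))).
Proof.
move=> gY; case: m => [m|[|m]].
- by rewrite -PoszD addn1; apply: generically_all.
- by apply: generically_mono (gK gY) => x /= ->.
- rewrite (_ : Negz m.+1 + 1 = Negz m); last by rewrite !NegzE -[m.+2]addn1 PoszD opprD addrNK.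
  by apply: generically_mono (gK (preserves_generic_iter m.+1 pg gY)) => x /= ->.
Qed.

Lemma iterZ_subr1 m Y : generic_pt Y ->
  generically (fun x => iterZ (m - 1) f g (Y x) = g (iterZ m f g (Y x))).
Proof.
move=> gY; case: m => [[|m]|m].
- exact: generically_all.
- rewrite (_ : m.+1%:Z - 1 = m); last by rewrite -addn1 PoszD addrK.
  by apply: generically_mono (fK (preserves_generic_iter m pf gY)) => x /= ->.
- rewrite (_ : Negz m - 1 = Negz m.+1); last by rewrite !NegzE -[m.+2]addn1 PoszD opprD.
  exact: generically_all.
Qed.

Lemma iterZ_add_nat m j Y : generic_pt Y ->
  generically (fun x => iterZ (m + j%:Z) f g (Y x) = iter j f (iterZ m f g (Y x))).
Proof.
move=> gY; elim: j => [|j IH]; first by rewrite addr0; apply: generically_all.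
rewrite -addn1 PoszD addrA.
apply: generically_mono (generically_and (iterZ_addr1 (m + j%:Z) gY) IH) => x [E1 E2].
by rewrite E1 E2 addn1.
Qed.
End Inverses.

Lemma iter_invariant (T : Type) (h : pt F -> T) e j p :
  (forall q, h (e q) = h q) -> h (iter j e p) = h p.
Proof. by move=> he; elim: j => //= j <-; apply: he. Qed.

Lemma iterZ_invariant (T : Type) (h : pt F -> T) f g m p :
  (forall q, h (f q) = h q) -> (forall q, h (g q) = h q) -> h (iterZ m f g p) = h p.
Proof. by move=> hf hg; case: m => m; apply: iter_invariant. Qed.

Lemma iter_scale (h c : pt F -> F) e j Y : preserves_generic e ->
  (forall q, c (e q) = c q) ->
  (forall p, specialized p -> admissible p -> h (e p) = c p * h p) ->
  generic_pt Y -> generically (fun x => h (iter j e (Y x)) = h (Y x) * c (Y x) ^+ j).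
Proof.
move=> pe ce he gY; elim: j => [|j IH]; first by apply: generically_all => x; rewrite mulr1.
apply: generically_mono (generically_and IH (generically_at he (preserves_generic_iter j pe gY))).
by move=> x [E1 E2] /=; rewrite E2 E1 iter_invariant // exprS mulrCA.
Qed.

Lemma iterZ_scale (h c : pt F -> F) f g m Y :
  preserves_generic f -> preserves_generic g ->
  (forall q, c (f q) = c q) -> (forall q, c (g q) = c q) ->
  (forall p, specialized p -> admissible p -> h (f p) = c p * h p) ->
  (forall p, specialized p -> admissible p -> h (g p) = (c p)^-1 * h p) ->
  generic_pt Y -> generically (fun x => h (iterZ m f g (Y x)) = h (Y x) * c (Y x) ^ m).
Proof.
move=> pf pg cf cg hf hg gY; case: m => m; first exact: iter_scale.
apply: generically_mono (iter_scale (c := fun q => (c q)^-1) m.+1 pg _ hg gY) => [x ->|q].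
  by rewrite exprVn.
by rewrite cg.
Qed.
End GenericMaps.

Section Commutation.
Context {F : numFieldType}.
Local Notation generically := (@generically F 9).
Local Notation generic_pt := (@generic_pt F 9).
Local Notation preserves_generic := (@preserves_generic F 9).
Local Notation commute_generically := (@commute_generically F 9).

Lemma generic_pt_spec : generic_pt (@spec_pt F).
Proof.
split; last by apply: generically_all => x; split; rewrite /= ?ord3E.
split=> [||||]; try apply: ord3_ind; rewrite /spec_pt /= ?ord3E /crd.
all: repeat apply: pos_rationalM; try apply: pos_rationalV; exact: pos_rational_coord.
Qed.

Lemma commute_R1_T4 : commute_generically (@R1_map F) (@T4_map F).
Proof. by move=> Y gY; apply: generically_at (@R1_T4_mapC F) _ gY. Qed.

Lemma commute_R1_T4inv : commute_generically (@R1_map F) (@T4inv_map F).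
Proof.
move=> Y gY; have gY' := generic_pt_T4inv_map gY.
have e1 := generically_at (@T4inv_mapK F) gY.
have e2 := commute_R1_T4 gY'.
have e3 := generically_at (@T4_mapK F) (generic_pt_R1_map gY').
apply: generically_mono (generically_and e1 (generically_and e2 e3)) => x [E1 [E2 E3]].
by rewrite -{2}E1 E2 E3.
Qed.

Lemma iter_R1_iterZ_T4C j m :
  commute_generically (iter j (@R1_map F)) (iterZ m (@T4_map F) (@T4inv_map F)).
Proof.
apply: commute_generically_iter; first exact: generic_pt_R1_map.
apply/commute_generically_sym/commute_generically_iterZ.
- exact: generic_pt_T4_map.
- exact: generic_pt_T4inv_map.
- exact/commute_generically_sym/commute_R1_T4.
- exact/commute_generically_sym/commute_R1_T4inv.
Qed.
End Commutation.

Lemma expz_sqr (R : unitRingType) (z : R) (e : int) : (z ^+ 2) ^ e = (z ^ e) ^+ 2.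
Proof. by rewrite -[z ^+ 2]/(z ^ 2%:Z) exprzAC. Qed.

Section Levels.
Variables (F : numFieldType) (k N : int).
Local Notation generically := (@generically F 9).
Implicit Type x : 'I_9 -> F.

Definition level_pt x :=
  iterZ N (@T4_map F) (@T4inv_map F) (iterZ k (@R1_map F) (@R1inv_map F) (spec_pt x)).
Local Notation R1_level j x := (iter j (@R1_map F) (level_pt x)).

Let generic_pt_R1s m : generic_pt (fun x => iterZ m (@R1_map F) (@R1inv_map F) (spec_pt x)).
Proof.
exact: (preserves_generic_iterZ m generic_pt_R1_map generic_pt_R1inv_map generic_pt_spec).
Qed.

Lemma generic_pt_level : generic_pt level_pt.
Proof.
exact: (preserves_generic_iterZ N generic_pt_T4_map generic_pt_T4inv_map (generic_pt_R1s k)).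
Qed.

Lemma iterZ_level j : generically (fun x =>
  iterZ N (@T4_map F) (@T4inv_map F) (iterZ (k + j%:Z) (@R1_map F) (@R1inv_map F) (spec_pt x))
  = R1_level j x).
Proof.
have e1 := iterZ_add_nat generic_pt_R1inv_map (generically_at (@R1inv_mapK F)) k j
  generic_pt_spec.
have e2 := iter_R1_iterZ_T4C j N (generic_pt_R1s k).
by apply: generically_mono (generically_and e1 e2) => x [-> ->].
Qed.

Lemma tauKN_level j :
  generically (fun x => tauKN x (k + j%:Z) N = tau (R1_level j x) 1).
Proof. by apply: generically_mono (iterZ_level j) => x <-. Qed.

Lemma tauKN_level_succ j :
  generically (fun x => tauKN x (k + j%:Z) (N + 1) = taub (R1_level j x) 1).
Proof.
have e := iterZ_addr1 generic_pt_T4inv_map (generically_at (@T4inv_mapK F)) N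
  (generic_pt_R1s (k + j%:Z)).
by apply: generically_mono (generically_and e (iterZ_level j)) => x [E <-]; rewrite /tauKN E.
Qed.

Lemma tauKN_level_pred j : generically (fun x =>
  tauKN x (k + j%:Z) (N - 1) = tau (T4inv_map (R1_level j x)) 1).
Proof.
have e := iterZ_subr1 generic_pt_T4_map (generically_at (@T4_mapK F)) N
  (generic_pt_R1s (k + j%:Z)).
by apply: generically_mono (generically_and e (iterZ_level j)) => x [E <-]; rewrite /tauKN E.
Qed.

Lemma zz_level j x : zz (R1_level j x) = crd x 0.
Proof. by rewrite iter_invariant // !iterZ_invariant. Qed.

Lemma cc_level j : generically (fun x =>
  cc (R1_level j x) = crd x 2 * (crd x 0 ^ N) ^+ 2).
Proof.
have e := iterZ_scale (h := @cc F) (c := fun q => zz q ^+ 2) N generic_pt_T4_map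
  generic_pt_T4inv_map (fun=> erefl) (fun=> erefl) (fun p _ _ => cc_T4_map p)
  (fun p _ _ => cc_T4inv_map p) (generic_pt_R1s k).
apply: generically_mono e => x /= E.
rewrite iter_invariant // E !(iterZ_invariant (h := @zz F)) //.
by rewrite (iterZ_invariant (h := @cc F)) // expz_sqr.
Qed.

Lemma A0_level j : generically (fun x =>
  A (R1_level j x) 0 = crd x 0 ^+ j * (crd x 1 * crd x 0 ^ k)).
Proof.
have e1 := iterZ_scale (h := fun p => A p 0) (c := @zz F) k generic_pt_R1_map
  generic_pt_R1inv_map (fun=> erefl) (fun=> erefl) (fun p sp _ => A0_R1_map sp)
  (fun p sp _ => A0_R1inv_map sp) (@generic_pt_spec F).
have e2 := iter_scale (h := fun p => A p 0) (c := @zz F) j generic_pt_R1_map (fun=> erefl)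
  (fun p sp _ => A0_R1_map sp) generic_pt_level.
apply: generically_mono (generically_and e1 e2) => x /= [E1 ->].
by rewrite (zz_level 0) (iterZ_invariant (h := fun p => A p 0)) // E1 /= ?ord3E mulrC.
Qed.

Definition regular x : Prop :=
  [/\ [&& crd x 0 != 0, crd x 1 != 0 & crd x 2 != 0],
    forall j, (j < 3)%N ->
      [/\ specialized (R1_level j x), admissible (R1_level j x),
        cc (R1_level j x) = crd x 2 * (crd x 0 ^ N) ^+ 2
        & A (R1_level j x) 0 = crd x 0 ^+ j * (crd x 1 * crd x 0 ^ k)]
    & forall j, (j < 4)%N ->
      [/\ tauKN x (k + j%:Z) N = tau (R1_level j x) 1,
        tauKN x (k + j%:Z) (N + 1) = taub (R1_level j x) 1
        & tauKN x (k + j%:Z) (N - 1) = tau (T4inv_map (R1_level j x)) 1]].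

Lemma generically_regular : generically regular.
Proof.
have nz i : generically (fun x => crd x i != 0) by apply/pos_rational_neq0/pos_rational_coord.
have nzs := generically_andb (nz 0) (generically_andb (nz 1) (nz 2)).
have pts := generically_forall_ltn 3 (fun j => generically_and
  (generic_pt_admissible (preserves_generic_iter j generic_pt_R1_map generic_pt_level))
  (generically_and (cc_level j) (A0_level j))).
have taus := generically_forall_ltn 4 (fun j => generically_and (tauKN_level j)
  (generically_and (tauKN_level_succ j) (tauKN_level_pred j))).
apply: generically_mono (generically_and nzs (generically_and pts taus)).
by move=> x [? [hp ht]]; split=> // j; [move/hp=> [[? ?] [? ?]] | move/ht=> [? [? ?]]].
Qed.

Section Regular.
Variable x : 'I_9 -> F.
Hypothesis rx : regular x.

Lemma regular_tauKN j : (j < 4)%N -> tauKN x (k + j%:Z) N = tau (R1_level j x) 1.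
Proof. by move=> hj; case: rx => _ _ /(_ j hj)[]. Qed.

Lemma regular_tauKN0 : tauKN x k N = tau (level_pt x) 1.
Proof. by have := regular_tauKN (j := 0) isT; rewrite addr0. Qed.

Lemma regular_tauKN_succ j : (j < 4)%N -> tauKN x (k + j%:Z) (N + 1) = taub (R1_level j x) 1.
Proof. by move=> hj; case: rx => _ _ /(_ j hj)[]. Qed.

Lemma regular_tauKN0_succ : tauKN x k (N + 1) = taub (level_pt x) 1.
Proof. by have := regular_tauKN_succ (j := 0) isT; rewrite addr0. Qed.

Lemma regular_tauKN_pred j : (j < 4)%N ->
  tauKN x (k + j%:Z) (N - 1) = tau (T4inv_map (R1_level j x)) 1.
Proof. by move=> hj; case: rx => _ _ /(_ j hj)[]. Qed.
End Regular.
End Levels.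

Section Equations.
Variables (F : numFieldType) (k N : int) (x : 'I_9 -> F).
Hypothesis rx : regular k N x.

Let hQ : crd x 0 != 0. Proof. by case: rx => /and3P[]. Qed.
Let ha : crd x 1 != 0. Proof. by case: rx => /and3P[]. Qed.
Let hg : crd x 2 != 0. Proof. by case: rx => /and3P[]. Qed.

Ltac rewrite_tauKN :=
  rewrite ?(regular_tauKN0 rx) ?(regular_tauKN0_succ rx) ?(regular_tauKN rx) //
    ?(regular_tauKN_succ rx) // ?(regular_tauKN_pred rx) //.

(* Express the integer powers of Q^{1/2} through the atoms Q^{k/2} and Q^{N/2}. *)
Ltac expz_simpl :=
  rewrite ?expz_sqr ?(opprD, opprK, mulNr) !(expfzDr _ _ hQ) -?invr_expz
    ?(mulrC _ k, mulrC _ N) -?(exprz_exp (crd x 0)).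

Ltac conclude_from base :=
  apply: etrans base; expz_simpl; field; rewrite ?hQ ?ha ?hg ?(expfz_neq0 _ hQ).

Lemma bilinear1 :
  let T := tauKN x in let Qh := crd x 0 in let Q := Qh ^+ 2 in
  let a0 := crd x 1 in let g := crd x 2 in
  T (k+1) (N+1) * T (k+2) (N-1)
  - Qh ^ (k - 4*N + 2) * g ^- 2 * a0 * T (k+3) N * T k N
  - Q ^ (- k + 4*N - 2) * g ^+ 4 * a0 ^- 2 * T (k+1) N * T (k+2) N = 0.
Proof.
cbv zeta; rewrite_tauKN.
have [_ /(_ 2%N isT)[sp np cp ap] _] := rx.
have := bilinear1_base sp np.
rewrite zz_level cp ap taub_R1_map2 tau_R1_map0 !tau_R1_map2 => base.
by conclude_from base.
Qed.

Lemma bilinear2 :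
  let T := tauKN x in let Qh := crd x 0 in let Q := Qh ^+ 2 in
  let a0 := crd x 1 in let g := crd x 2 in
  T (k+2) (N+1) * T (k+1) (N-1)
  - Qh ^ (k + 4*N + 2) * g ^+ 2 * a0 * T (k+3) N * T k N
  - Q ^ (- k - 4*N - 2) * g ^- 4 * a0 ^- 2 * T (k+2) N * T (k+1) N = 0.
Proof.
cbv zeta; rewrite_tauKN.
have [_ /(_ 1%N isT)[sp np cp ap] _] := rx.
have := bilinear2_base sp np.
rewrite zz_level cp ap tau_R1_map2 => base.
by conclude_from base.
Qed.

Lemma bilinear3 :
  let T := tauKN x in let Qh := crd x 0 in let Q := Qh ^+ 2 in
  let a0 := crd x 1 in let g := crd x 2 in
  Qh ^ (- (3*k - 4*N + 4)) * g ^+ 2 * a0 ^- 3 * T (k+3) N * T k (N+1)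
  - Q ^ (- 3*k + 4*N - 4) * g ^+ 4 * a0 ^- 6 * T (k+1) N * T (k+2) (N+1)
  - T (k+1) (N+1) * T (k+2) N = 0.
Proof.
cbv zeta; rewrite_tauKN.
have [_ /(_ 2%N isT)[sp np cp ap] _] := rx.
have := bilinear3_base sp np.
rewrite zz_level cp ap taub_R1_map0 !taub_R1_map2 tau_R1_map2 => base.
by conclude_from base.
Qed.

Lemma bilinear4 :
  let T := tauKN x in let Qh := crd x 0 in let Q := Qh ^+ 2 in
  let a0 := crd x 1 in let g := crd x 2 in
  Qh ^ (- (3*k + 4*N + 8)) * g ^- 2 * a0 ^- 3 * T (k+3) (N+1) * T k N
  - Q ^ (- 3*k - 4*N - 8) * g ^- 4 * a0 ^- 6 * T (k+2) N * T (k+1) (N+1)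
  - T (k+2) (N+1) * T (k+1) N = 0.
Proof.
cbv zeta; rewrite_tauKN.
have [_ /(_ 2%N isT)[sp np cp ap] _] := rx.
have := bilinear4_base sp np.
rewrite zz_level cp ap tau_R1_map0 !tau_R1_map2 taub_R1_map2 => base.
by conclude_from base.
Qed.
End Equations.

Theorem propositionB7 (R : realType) (k N : int) :
  exists D : {mpoly R[i][9]}, D != 0 /\
  forall x : 'I_9 -> R[i], D.@[x] != 0 ->
    let T := tauKN x in
    let Qh := crd x 0 in (* Q^{1/2} = q^{1/12} *)
    let Q := Qh ^+ 2 in  (* Q = q^{1/6} *)
    let a0 := crd x 1 in (* alpha_0 = a_0^{1/6} *)
    let g := crd x 2 in  (* gamma = c^{1/6} *)
    [/\ T (k+1) (N+1) * T (k+2) (N-1)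
          - Qh ^ (k - 4*N + 2) * g ^- 2 * a0 * T (k+3) N * T k N
          - Q ^ (- k + 4*N - 2) * g ^+ 4 * a0 ^- 2 * T (k+1) N * T (k+2) N = 0,
        T (k+2) (N+1) * T (k+1) (N-1)
          - Qh ^ (k + 4*N + 2) * g ^+ 2 * a0 * T (k+3) N * T k N
          - Q ^ (- k - 4*N - 2) * g ^- 4 * a0 ^- 2 * T (k+2) N * T (k+1) N = 0,
        Qh ^ (- (3*k - 4*N + 4)) * g ^+ 2 * a0 ^- 3 * T (k+3) N * T k (N+1)
          - Q ^ (- 3*k + 4*N - 4) * g ^+ 4 * a0 ^- 6 * T (k+1) N * T (k+2) (N+1)
          - T (k+1) (N+1) * T (k+2) N = 0 &
        Qh ^ (- (3*k + 4*N + 8)) * g ^- 2 * a0 ^- 3 * T (k+3) (N+1) * T k N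
          - Q ^ (- 3*k - 4*N - 8) * g ^- 4 * a0 ^- 6 * T (k+2) N * T (k+1) (N+1)
          - T (k+2) (N+1) * T (k+1) N = 0].
Proof.
have [D D1 HD] := generically_regular (R[i]) k N.
exists D; split=> [|x /HD rx]; first by apply: contraNneq D1 => ->; rewrite meval0.
by split; [exact: bilinear1 | exact: bilinear2 | exact: bilinear3 | exact: bilinear4].
Qed.
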